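(* Let $(X,\mathcal{X},\mu)$ be a probability space, $(Y,\mathcal{Y})$ a measurable space, $f\colon X\to Y$ a measurable function, and $\mu_f=\mu\circ\mathit{pre}_f\colon\mathcal{Y}\to[0,1]$ the output probability measure. Let $\mathit{pre}^\sharp_f\colon\wp(Y)\to\wp(X)$ satisfy $\mathit{pre}_f(A)\subseteq\mathit{pre}^\sharp_f(A)$ for all $A\subseteq Y$, and let $\uparrow\colon\wp(X)\to\mathcal{X}$ be an abstraction. Define $\mu^\sharp_f=\mu\circ\uparrow\circ\,\mathit{pre}^\sharp_f$. Then $\mu_f(A)\le\mu^\sharp_f(A)$ for all $A\in\mathcal{Y}$, and if $\mathit{pre}^\sharp_f$ and $\uparrow$ are monotone then $\mu^\sharp_f$ is monotone.
   Context: For $f\colon X\to Y$, $\mathit{pre}_f(B)=\{x\in X\mid f(x)\in B\}$; $f$ is measurable if $\mathit{pre}_f(B)\in\mathcal{X}$ for all $B\in\mathcal{Y}$. An abstraction is a function $\uparrow\colon\wp(X)\to\mathcal{X}$ with $S\subseteq\,\uparrow(S)$ for all $S\subseteq X$. A set function $g$ is monotone if $A\subseteq B$ implies $g(A)\subseteq g(B)$ (resp. $g(A)\le g(B)$ for real-valued $g$). *)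

From HB Require Import structures.
From mathcomp Require Import all_boot all_order all_algebra.
From mathcomp Require Import all_classical all_reals all_analysis.
Set Implicit Arguments. Unset Strict Implicit. Unset Printing Implicit Defensive.
Import Order.TTheory GRing.Theory Num.Theory.
Local Open Scope classical_set_scope.
Local Open Scope ring_scope.

Definition pre {X Y : Type} (f : X -> Y) (B : set Y) : set X := f @^-1` B.

Definition abstraction {d} {X : measurableType d} (up : set X -> set X) : Prop :=
  (forall S, measurable (up S)) /\ (forall S, S `<=` up S).

Definition set_monotone {A B : Type} (g : set A -> set B) : Prop :=
  forall S T, S `<=` T -> g S `<=` g T.

Definition out_measure {d d'} {X : measurableType d} {Y : measurableType d'}
  {R : realType} (mu : set X -> \bar R) (f : X -> Y) : set Y -> \bar R :=
  fun B => mu (pre f B).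

Definition abs_measure {d} {X : measurableType d} {Y : Type} {R : realType}
  (mu : set X -> \bar R) (up : set X -> set X) (preS : set Y -> set X)
  : set Y -> \bar R := fun A => mu (up (preS A)).

From HB Require Import structures.
From mathcomp Require Import all_boot all_order all_algebra.
From mathcomp Require Import all_classical all_reals all_analysis.
Import Order.TTheory GRing.Theory Num.Theory.
Local Open Scope classical_set_scope.
Local Open Scope ereal_scope.

(* Both claims are monotonicity of the measure [mu]: [pre f A] is contained in
   [up (pre^# A)] because [pre^#] over-approximates [pre f] and [up] is extensive,
   and monotone [pre^#] and [up] compose to a monotone map into measurable sets. *)

Section abstract_measure.
Context d {X : measurableType d} {R : realType} (mu : measure X R).
Variable up : set X -> set X.
Hypothesis up_abs : abstraction up.

Lemma out_measure_le_abs_measure d' {Y : measurableType d'} (f : X -> Y)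
    (preS : set Y -> set X) :
  measurable_fun setT f -> (forall A, pre f A `<=` preS A) ->
  forall A, measurable A -> out_measure mu f A <= abs_measure mu up preS A.
Proof.
move=> mf pre_sub A mA; have [up_meas up_ext] := up_abs.
have mpre : measurable (pre f A) by rewrite -[pre f A]setTI; exact: mf.
by apply: le_measure; rewrite ?inE // => x /pre_sub /up_ext.
Qed.

Lemma abs_measure_monotone {Y : Type} (preS : set Y -> set X) :
  set_monotone preS -> set_monotone up ->
  forall A B, A `<=` B -> abs_measure mu up preS A <= abs_measure mu up preS B.
Proof.
move=> mpreS mup A B AB; have [up_meas _] := up_abs.
by apply: le_measure; rewrite ?inE //; exact/mup/mpreS.
Qed.

End abstract_measure.

Theorem theorem1 (d d' : measure_display) (X : measurableType d)
  (Y : measurableType d') (R : realType) (mu : probability X R)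
  (f : X -> Y) (mf : measurable_fun setT f)
  (preS : set Y -> set X) (hpre : forall A : set Y, pre f A `<=` preS A)
  (up : set X -> set X) (hup : abstraction up) :
  (forall A : set Y, measurable A ->
     out_measure mu f A <= abs_measure mu up preS A) /\
  (set_monotone preS -> set_monotone up ->
     forall A B : set Y, A `<=` B ->
       abs_measure mu up preS A <= abs_measure mu up preS B).
Proof.
split; first exact: out_measure_le_abs_measure.
exact: abs_measure_monotone.
Qed.
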